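(* Let $J\subseteq\Sigma$ and $c\in\mathbf{Z}^\Sigma$ with $c_\tau\in[1,p-1]$ for all $\tau$. Then $r=r(J,c)$ (defined using any admissible choice of $\tau_0$, if a choice is needed) satisfies $r_\tau\in[1,p]$ for all $\tau\in\Sigma$ and, for every $\tau\in\Sigma$, \[\sum_{i=0}^{f-1}(-1)^{\tau\circ\varphi^i\notin J}\,r_{\tau\circ\varphi^i}\,p^i\equiv\Omega_{\tau,c}\pmod{p^f-1}.\]
   Context: Let $p$ be a prime, $k$ a finite field of degree $f$ over $\mathbf{F}_p$, $\Sigma=\mathrm{Hom}_{\mathbf{F}_p}(k,\overline{\mathbf{F}}_p)$, $\varphi(x)=x^p$ on $k$ (so $\Sigma=\{\tau\circ\varphi^i:0\le i<f\}$). For $a\in\mathbf{Z}^\Sigma$, $\Omega_{\tau,a}=\sum_{i=0}^{f-1}p^ia_{\tau\circ\varphi^i}$. For $J\subseteq\Sigma$, $(-1)^{\tau\notin J}$ is $-1$ if $\tau\notin J$ and $1$ if $\tau\in J$. The map $\delta_J\colon\mathbf{Z}^\Sigma\times\Sigma\to\mathbf{Z}^\Sigma$: given $(x,\tau)$, let $y=\delta_J(x,\tau)$. If $1\le x_\tau\le p$, $y=x$. If $x_\tau\le0$: $y_\tau=x_\tau+p$, $y_{\tau\circ\varphi}=x_{\tau\circ\varphi}-1$ if $\tau\circ\varphi\notin J$ and $x_{\tau\circ\varphi}+1$ if $\tau\circ\varphi\in J$, and $y_\kappa=x_\kappa$ for other $\kappa$. If $x_\tau>p$: $y_\tau=x_\tau-p$,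 $y_{\tau\circ\varphi}=x_{\tau\circ\varphi}-1$ if $\tau\circ\varphi\notin J$ and $x_{\tau\circ\varphi}+1$ if $\tau\circ\varphi\in J$, and $y_\kappa=x_\kappa$ for other $\kappa$. The vector $r(J,c)$ for $c_\tau\in[1,p-1]$: define $y_0\in\mathbf{Z}^\Sigma$ by $y_{0,\tau}=c_\tau$ if $\tau\in J,\tau\circ\varphi^{-1}\in J$; $c_\tau+1$ if $\tau\in J,\tau\circ\varphi^{-1}\notin J$; $p-c_\tau$ if $\tau\notin J,\tau\circ\varphi^{-1}\in J$; $p-1-c_\tau$ if $\tau\notin J,\tau\circ\varphi^{-1}\notin J$. If $y_{0,\tau}>0$ for all $\tau$, $r(J,c)=y_0$. Otherwise choose $\tau_0$ with $y_{0,\tau_0}=0$, define $y_\kappa=\delta_J(y_{\kappa-1},\tau_0\circ\varphi^{\kappa-1})$ for $\kappa=1,\dots,f$, and set $r(J,c)=y_f$. *)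

From mathcomp Require Import all_boot all_order all_algebra.
Set Implicit Arguments. Unset Strict Implicit. Unset Printing Implicit Defensive.
Import Order.TTheory GRing.Theory Num.Theory.
Local Open Scope ring_scope.

(* Sigma = Hom(k, Fpbar) with f = [k:F_p] is modelled as 'I_f, with a fixed
   tau as 0 and tau o phi^i as i; precomposition with phi is the cyclic
   successor ordS, with phi^{-1} the cyclic predecessor ord_pred. *)

Definition phis (f : nat) (i : nat) (t : 'I_f) : 'I_f := iter i (@ordS f) t.

Definition Omega (p f : nat) (t : 'I_f) (a : 'I_f -> int) : int :=
  \sum_(i < f) (p%:Z ^+ i) * a (phis i t).

Definition sgnJ (f : nat) (J : {set 'I_f}) (t : 'I_f) : int :=
  if t \in J then 1 else -1.

(* The two modifications are applied successively (first at
   tau, then at tau o phi); for f >= 2 this is exactly the paper's definition,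
   and for f = 1 (tau o phi = tau) it is the cumulative reading. *)
Definition delta (p f : nat) (J : {set 'I_f}) (x : 'I_f -> int) (t : 'I_f)
  : 'I_f -> int :=
  let t1 := ordS t in
  let corr : int := if t1 \in J then 1 else -1 in
  if (1 <= x t) && (x t <= p%:Z) then x
  else
    let y1 := fun k => if k == t then
                         (if x t <= 0 then x t + p%:Z else x t - p%:Z)
                       else x k in
    fun k => if k == t1 then y1 k + corr else y1 k.

Fixpoint delta_iter (p f : nat) (J : {set 'I_f}) (n : nat) (x : 'I_f -> int)
  (t : 'I_f) : 'I_f -> int :=
  match n with
  | 0 => x
  | n'.+1 => delta_iter p J n' (delta p J x t) (ordS t)
  end.

Definition y0 (p f : nat) (J : {set 'I_f}) (c : 'I_f -> int) : 'I_f -> int :=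
  fun t =>
    let tm := ord_pred t in
    if t \in J then (if tm \in J then c t else c t + 1)
    else (if tm \in J then p%:Z - c t else p%:Z - 1 - c t).

Definition rJc (p f : nat) (J : {set 'I_f}) (c : 'I_f -> int) (t0 : 'I_f)
  : 'I_f -> int :=
  if [forall t, 0 < y0 p J c t] then y0 p J c
  else delta_iter p J f (y0 p J c) t0.

(* Put OmegaJ_u(x) = sum_i (-1)^(u o phi^i notin J) x_(u o phi^i) p^i.
   Modulo p^f - 1, multiplying by p rotates the weights p^i cyclically.  Hence
   a step of delta_J, which moves x_tau by -/+ p and x_(tau o phi) by
   (-1)^(tau o phi notin J), leaves OmegaJ_u unchanged as soon as x_tau <= 0
   forces tau notin J and x_tau > p forces tau in J; by the same rotation,
   OmegaJ_u(y_0) = Omega_(u,c).  For the bounds, the iteration started at tau_0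
   (where y_0 vanishes, so tau_0 notin J and the first step sets it to p)
   pushes a carry of at most one unit around the cycle: every coordinate it
   reaches lies within one unit of [1, p] on the side allowed by the sign
   condition and is brought back into [1, p], and the last carry lands on
   tau_0, lowering p to p - 1. *)

From mathcomp Require Import all_boot all_order all_algebra zify ring.
Import Order.TTheory GRing.Theory Num.Theory.
Set Implicit Arguments. Unset Strict Implicit. Unset Printing Implicit Defensive.

Section CyclicIndex.
Variable f : nat.
Implicit Types (t u s : 'I_f).

Lemma val_phis i t : phis i t = (t + i) %% f :> nat.
Proof.
elim: i => [|i IH]; first by rewrite addn0 modn_small.
by rewrite /phis iterS -/(phis i t) /= IH -addn1 modnDml -addnA addn1 addnS.
Qed.

Lemma phisSr i t : phis i (ordS t) = phis i.+1 t.
Proof. by rewrite /phis iterSr. Qed.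

Lemma phis_f t : phis f t = t.
Proof. by apply: val_inj; rewrite /= val_phis modnDr modn_small. Qed.

Definition phis_index u s : nat := (s + (f - u)) %% f.

Lemma phis_index_lt u s : (phis_index u s < f)%N.
Proof. by rewrite ltn_pmod // (leq_ltn_trans (leq0n _) (ltn_ord s)). Qed.

Lemma phis_indexK u s : phis (phis_index u s) u = s.
Proof.
apply: val_inj; rewrite /= val_phis modnDmr addnCA subnKC ?modnDr ?modn_small //.
exact: ltnW.
Qed.

Lemma phisK u i : (i < f)%N -> phis_index u (phis i u) = i.
Proof.
move=> lt_if; rewrite /phis_index val_phis modnDml -addnA addnCA subnKC.
  by rewrite modnDr modn_small.
exact: ltnW.
Qed.

Lemma phis_inj t i j : (i < f)%N -> (j < f)%N -> phis i t = phis j t -> i = j.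
Proof. by move=> lt_if lt_jf /(congr1 (phis_index t)); rewrite !phisK. Qed.

Lemma phis_index_ordS u s : phis_index u (ordS s) = (phis_index u s).+1 %% f.
Proof. by rewrite /phis_index /= (modnDml s.+1) -[in RHS]addn1 modnDml addn1 addSn. Qed.

End CyclicIndex.

Local Open Scope ring_scope.

Lemma exp_phis_index_ordS (a : int) f (u s : 'I_f) :
  (a ^+ f - 1 %| a ^+ phis_index u (ordS s) - a * a ^+ phis_index u s)%Z.
Proof.
rewrite phis_index_ordS -exprS; have := phis_index_lt u s.
rewrite leq_eqVlt => /orP[/eqP-> | lt_f]; last by rewrite modn_small ?subrr ?dvdz0.
by rewrite modnn expr0 -opprB rpredN dvdzz.
Qed.

Lemma sum_phis (V : nmodType) f (u : 'I_f) (F : 'I_f -> nat -> V) :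
  \sum_(i < f) F (phis i u) i = \sum_s F s (phis_index u s).
Proof.
rewrite [RHS](reindex_inj (h := fun i : 'I_f => phis i u)) /=.
  by apply: eq_bigr => i _; rewrite phisK.
by move=> i j /phis_inj eq_ij; apply/val_inj/eq_ij.
Qed.

Definition OmegaJ (p f : nat) (J : {set 'I_f}) (u : 'I_f) (x : 'I_f -> int) : int :=
  \sum_(i < f) sgnJ J (phis i u) * x (phis i u) * p%:Z ^+ i.

Definition add_at f (x : 'I_f -> int) (s : 'I_f) (a : int) : 'I_f -> int :=
  fun k => if k == s then x k + a else x k.

Section Congruences.
Variables (p f : nat) (J : {set 'I_f}).
Implicit Types (x c : 'I_f -> int) (t u s : 'I_f).
Local Notation m := (p%:Z ^+ f - 1).

Lemma OmegaJE u x :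
  OmegaJ p J u x = \sum_s sgnJ J s * x s * p%:Z ^+ phis_index u s.
Proof. exact: (sum_phis u (fun s i => sgnJ J s * x s * p%:Z ^+ i)). Qed.

Lemma OmegaE u c : Omega p u c = \sum_s c s * p%:Z ^+ phis_index u s.
Proof.
rewrite /Omega (sum_phis u (fun s i => p%:Z ^+ i * c s)).
by apply: eq_bigr => s _; rewrite mulrC.
Qed.

Lemma eq_OmegaJ u x y : x =1 y -> OmegaJ p J u x = OmegaJ p J u y.
Proof. by move=> eq_xy; apply: eq_bigr => i _; rewrite eq_xy. Qed.

Lemma OmegaJ_add_at u x s a :
  OmegaJ p J u (add_at x s a) = OmegaJ p J u x + sgnJ J s * a * p%:Z ^+ phis_index u s.
Proof.
rewrite !OmegaJE [LHS](bigD1 s) // [in RHS](bigD1 s) //= /add_at eqxx.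
rewrite (eq_bigr (fun k => sgnJ J k * x k * p%:Z ^+ phis_index u k)).
  by rewrite mulrDr mulrDl addrAC.
by move=> k /negbTE->.
Qed.

Lemma deltaE x t : ~~ (1 <= x t <= p%:Z) ->
  delta p J x t =1 add_at (add_at x t (if x t <= 0 then p%:Z else - p%:Z))
                          (ordS t) (sgnJ J (ordS t)).
Proof.
move=> /negbTE out k; rewrite /delta /add_at out /sgnJ.
by case: (x t <= 0); case: ifP => _; case: ifP => [/eqP->|].
Qed.

Lemma OmegaJ_delta u x t :
  (x t <= 0 -> t \notin J) -> (p%:Z < x t -> t \in J) ->
  (OmegaJ p J u (delta p J x t) = OmegaJ p J u x %[mod m])%Z.
Proof.
move=> neg_notin big_in; have [in_range | out] := boolP (1 <= x t <= p%:Z).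
  by rewrite /delta in_range.
rewrite (eq_OmegaJ u (deltaE out)) !OmegaJ_add_at.
have -> : sgnJ J t * (if x t <= 0 then p%:Z else - p%:Z) = - p%:Z.
  have [xt_neg | xt_pos] := boolP (x t <= 0).
    by rewrite /sgnJ (negbTE (neg_notin xt_neg)) mulN1r.
  by rewrite /sgnJ big_in ?mul1r //; move: out xt_pos; lia.
have -> : sgnJ J (ordS t) * sgnJ J (ordS t) = 1 by rewrite /sgnJ; case: ifP.
apply/eqP; rewrite eqz_mod_dvd mul1r mulNr addrAC [_ + - _]addrAC subrr add0r addrC.
exact: exp_phis_index_ordS.
Qed.

Lemma sgnJ_y0 c s :
  sgnJ J s * y0 p J c s = c s + ((ord_pred s \notin J)%:R - p%:Z * (s \notin J)%:R).
Proof. by rewrite /sgnJ /y0; case: (s \in J); case: (ord_pred s \in J) => /=; ring. Qed.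

Lemma OmegaJ_y0 u c : (OmegaJ p J u (y0 p J c) = Omega p u c %[mod m])%Z.
Proof.
apply/eqP; rewrite eqz_mod_dvd OmegaJE OmegaE -sumrB.
under eq_bigr => s _ do rewrite sgnJ_y0 -mulrBl [c s + _]addrC addrK mulrBl -mulrA.
rewrite sumrB (reindex_inj (@ordS_inj f)) -sumrB /=.
apply: rpred_sum => s _; rewrite ordSK mulrCA -mulrBr.
exact/dvdz_mull/exp_phis_index_ordS.
Qed.

End Congruences.

Section Carries.
Variables (p f : nat) (J : {set 'I_f}).
Implicit Types (x : 'I_f -> int) (t u s : 'I_f) (v : int).
Local Notation m := (p%:Z ^+ f - 1).

(* A value [settles] at s if one step of delta at s brings it into [1, p]
   while meeting the sign condition of [OmegaJ_delta]; [pending] and [absorbs]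
   values still settle, resp. stay in [1, p], after a carry (-1)^(s notin J). *)
Definition settles s v : bool :=
  if s \in J then 1 <= v <= p%:Z + 1 else -1 <= v <= p%:Z.

Definition pending s v : bool :=
  if s \in J then 1 <= v <= p%:Z else 0 <= v <= p%:Z.

Definition absorbs s v : bool :=
  if s \in J then 1 <= v <= p%:Z - 1 else 2 <= v <= p%:Z.

Lemma pending_settles s v (b : bool) :
  pending s v -> settles s (v + (if b then 0 else sgnJ J s)).
Proof. by rewrite /pending /settles /sgnJ; case: (s \in J); case: b; lia. Qed.

Lemma absorbs_in_range s v (b : bool) :
  absorbs s v -> 1 <= v + (if b then 0 else sgnJ J s) <= p%:Z.
Proof. by rewrite /absorbs /sgnJ; case: (s \in J); case: b; lia. Qed.

Lemma OmegaJ_delta_settles u x t : settles t (x t) ->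
  (OmegaJ p J u (delta p J x t) = OmegaJ p J u x %[mod m])%Z.
Proof.
by rewrite /settles => xt; apply: OmegaJ_delta; move: xt; case: (t \in J); lia.
Qed.

Lemma pending_in_range s v : pending s v -> 0 < v -> 1 <= v <= p%:Z.
Proof. by rewrite /pending; case: (s \in J); lia. Qed.

Lemma pending0_notin s : pending s 0 -> s \notin J.
Proof. by rewrite /pending; case: (s \in J). Qed.

Lemma y0_pending c s : (forall t, 1 <= c t <= p%:Z - 1) -> pending s (y0 p J c s).
Proof.
move=> c_range; rewrite /pending /y0; have := c_range s.
by case: (s \in J); case: (ord_pred s \in J); lia.
Qed.

Lemma neq_ordS t : (1 < f)%N -> t != ordS t.
Proof. by move=> f_gt1; apply/eqP => /(@phis_inj f t 0 1); lia. Qed.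

Lemma delta_other x t k : k != t -> k != ordS t -> delta p J x t k = x k.
Proof.
by move=> /negbTE k_t /negbTE k_St; rewrite /delta; case: ifP; rewrite ?k_t ?k_St.
Qed.

Lemma delta_phis_other x t i : (1 < i < f)%N -> delta p J x t (phis i t) = x (phis i t).
Proof.
move=> i_range; apply: delta_other; apply/eqP.
  by move/(@phis_inj f t i 0); lia.
by move/(@phis_inj f t i 1); lia.
Qed.

Lemma delta_ordS x t : t != ordS t ->
  delta p J x t (ordS t) =
  x (ordS t) + (if 1 <= x t <= p%:Z then 0 else sgnJ J (ordS t)).
Proof.
move=> t_St; rewrite /delta; case: ifP => _; first by rewrite addr0.
by rewrite eqxx eq_sym (negbTE t_St).
Qed.

Hypothesis p_gt1 : (1 < p)%N.

Lemma settles_delta x t :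
  t != ordS t -> settles t (x t) -> 1 <= delta p J x t t <= p%:Z.
Proof.
move=> /negbTE t_St xt; rewrite /delta; case: ifP => // out; rewrite t_St eqxx.
by move: xt out; rewrite /settles; case: (t \in J); case: ifP; lia.
Qed.

Definition wave n x t : Prop :=
  [/\ settles t (x t),
      forall i, (0 < i <= n)%N -> pending (phis i t) (x (phis i t)),
      absorbs (phis n.+1 t) (x (phis n.+1 t))
    & forall i, (n.+1 < i < f)%N -> 1 <= x (phis i t) <= p%:Z].

Lemma wave0_in_range x t : (1 < f)%N -> wave 0 x t ->
  forall s, 1 <= delta p J x t s <= p%:Z.
Proof.
move=> f_gt1 [xt _ x1 x_rest] s; rewrite -(phis_indexK t s).
have := phis_index_lt t s; case: (phis_index t s) => [|[|i]] i_lt.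
- exact: settles_delta (neq_ordS _ f_gt1) xt.
- by rewrite /phis /= delta_ordS ?neq_ordS //; apply: absorbs_in_range.
- by rewrite delta_phis_other ?x_rest.
Qed.

Lemma wave_step n x t : (n.+2 < f)%N -> wave n.+1 x t ->
  wave n (delta p J x t) (ordS t).
Proof.
move=> lt_f [xt x_pend x_abs x_rest]; have t_St : t != ordS t by apply: neq_ordS; lia.
split.
- by rewrite delta_ordS //; apply: pending_settles; apply: (x_pend 1%N).
- by move=> i i_range; rewrite phisSr delta_phis_other; [apply: x_pend | ]; lia.
- by rewrite phisSr delta_phis_other //; lia.
- move=> i i_range; rewrite phisSr.
  have [-> | i_f] := eqVneq i.+1 f; first by rewrite phis_f; apply: settles_delta.
  by rewrite delta_phis_other; [apply: x_rest | ]; lia.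
Qed.

Lemma wave_delta_iter n x t : (n.+1 < f)%N -> wave n x t ->
  (forall s, 1 <= delta_iter p J n.+1 x t s <= p%:Z) /\
  (forall u, (OmegaJ p J u (delta_iter p J n.+1 x t) = OmegaJ p J u x %[mod m])%Z).
Proof.
elim: n x t => [|n IH] x t lt_f w_x; have [xt _ _ _] := w_x.
  by split=> [|u]; [apply: wave0_in_range | apply: OmegaJ_delta_settles].
have [IH_range IH_cong] := IH _ _ (ltnW lt_f) (wave_step lt_f w_x).
by split=> // u; rewrite /= IH_cong OmegaJ_delta_settles.
Qed.

Lemma delta_iter_from_zero n x t0 :
  n.+1 = f -> x t0 = 0 -> (forall s, pending s (x s)) ->
  (forall s, 1 <= delta_iter p J n.+1 x t0 s <= p%:Z) /\
  (forall u, (OmegaJ p J u (delta_iter p J n.+1 x t0) = OmegaJ p J u x %[mod m])%Z).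
Proof.
move=> n_f xt0 x_pend.
have t0_notin : t0 \notin J by apply: pending0_notin; rewrite -xt0.
have xt0_settles : settles t0 (x t0) by rewrite /settles (negbTE t0_notin) xt0.
case: n n_f => [f1 | n n_f].
  have all_t0 s : s = t0 by apply/ord_inj; have := ltn_ord s; have := ltn_ord t0; lia.
  split=> [s|u]; last exact: OmegaJ_delta_settles.
  rewrite /= (all_t0 s) /delta xt0 /= (all_t0 (ordS t0)) eqxx (negbTE t0_notin).
  lia.
have t0_St : t0 != ordS t0 by apply: neq_ordS; lia.
have w : wave n (delta p J x t0) (ordS t0).
  split=> [||| i]; last lia.
  - by rewrite delta_ordS //; apply: pending_settles.
  - by move=> i i_range; rewrite phisSr delta_phis_other; [apply: x_pend | ]; lia.
  - rewrite phisSr n_f phis_f /delta xt0 /= (negbTE t0_St) eqxx /absorbs.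
    by rewrite (negbTE t0_notin); lia.
have [w_range w_cong] := wave_delta_iter (ltac:(lia) : (n.+1 < f)%N) w.
by split=> // u; rewrite /= w_cong OmegaJ_delta_settles.
Qed.

End Carries.

Theorem lemma5p6 (p f : nat) (hp : prime p) (hf : (0 < f)%N)
  (J : {set 'I_f}) (c : 'I_f -> int)
  (hc : forall t, 1 <= c t <= p%:Z - 1)
  (t0 : 'I_f)
  (ht0 : ~~ [forall t, 0 < y0 p J c t] -> y0 p J c t0 = 0) :
  let r := rJc p J c t0 in
  (forall t, 1 <= r t <= p%:Z) /\
  (forall t, (\sum_(i < f) sgnJ J (phis i t) * r (phis i t) * p%:Z ^+ i
              = Omega p t c %[mod (p%:Z ^+ f - 1)])%Z).
Proof.
move=> r; have p_gt1 := prime_gt1 hp; have y0_pend s := y0_pending J s hc.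
suff [r_range r_cong] : (forall s, 1 <= r s <= p%:Z) /\
    (forall u, (OmegaJ p J u r = OmegaJ p J u (y0 p J c) %[mod p%:Z ^+ f - 1])%Z).
  by split=> // u; apply: etrans (r_cong u) (OmegaJ_y0 p J u c).
rewrite /r /rJc; case: ifP => [/forallP y0_pos | /negbT/ht0 y0_t0].
  by split=> // s; apply: pending_in_range.
by have := delta_iter_from_zero p_gt1 (prednK hf) y0_t0 y0_pend; rewrite prednK.
Qed.
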